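(* Let $\mathbf w$ be a colored involution, and for integers $i,j$ let $a_i$ be the number of biletters $\binom{i}{i}$, $b_i$ the number of biletters $\binom{i}{\bar i}$, and, for $i\ne j$, $c_{ij}$ the number of biletters $\binom{i}{j}$ and $d_{ij}$ the number of biletters $\binom{i}{\bar j}$ in $\mathbf w$ (so $c_{ij}=c_{ji}$, $d_{ij}=d_{ji}$). Then the bottom row of $\mathbf w^{st}$ is an involution in $B_n$ with $a$ fixed points, $b$ barred fixed points, $c$ two-cycles and $d$ barred two-cycles, where \[ a=\sum_i a_i,\quad b=\sum_i\Big(b_i-2\Big\lfloor\frac{b_i}{2}\Big\rfloor\Big),\quad c=\sum_{i<j}c_{ij},\quad d=\sum_{i<j}d_{ij}+\sum_i\Big\lfloor\frac{b_i}{2}\Big\rfloor. \]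
   Context: Letters are positive integers, possibly barred; for a letter $y$, $y^{neg}$ is $y$ if unbarred and $-m$ if $y=\bar m$; $|y|$ is the underlying integer. A biletter is a pair $\binom{x}{y}$ of letters. A doubly colored biword is a finite sequence of biletters in canonical order: $\binom{x}{y}$ precedes $\binom{k}{l}$ iff $|x|<|k|$, or $|x|=|k|$ with $x$ barred and $k$ unbarred, or $x=k$ both unbarred and $y^{neg}<l^{neg}$, or $x=k$ both barred and $l^{neg}<y^{neg}$. A colored biword is a doubly colored biword whose top letters are all unbarred; $n$ denotes its length. Operations: $\mathbf w^{\overline{st}}$ replaces the top letters, read left to right, by $1,2,\dots$ keeping their bars; $\mathbf w^{inv}$ swaps the two letters of each biletter (bars travel with letters) and reorders canonically; for a colored biword, $\mathbf w^{inv_r}$ replaces each biletter $\binom{x}{y}$ by $\binom{|y|}{x'}$ where $x'$ is $x$ barred iff $y$ is barred, and reorders canonically. $\mathbf w$ is a colored involution if $\mathbf w^{inv_r}=\mathbf w$. The standardisation is $\mathbf w^{st}=(((\mathbf w^{\overline{st}})^{inv})^{\overline{st}})^{inv}$; it has top row $1,\dots,n$ and bottom row a word $\pi$ in letters $\{1,\dots,n,\bar1,\dots,\bar n\}$ using each $k\in[n]$ exactly once (an element of $B_n$). Such $\pi$ is an involution if for each $k$: $\pi_k=k$ (fixed point), $\pi_k=\bar k$ (barred fixed point), or for some $l\ne k$, $\pi_k=l,\pi_l=k$ (two-cycle) or $\pi_k=\bar l,\pi_l=\bar k$ (barred two-cycle). *)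

From mathcomp Require Import all_boot all_order all_algebra.
Set Implicit Arguments. Unset Strict Implicit. Unset Printing Implicit Defensive.

(* A letter is a pair (m, barred): the integer m (required positive where
   relevant) together with a flag telling whether it is barred. *)
Definition letter := (nat * bool)%type.
Definition biletter := (letter * letter)%type.   (* (top, bottom) *)

Definition lneg (y : letter) : int := if y.2 then (- (y.1 : int))%R else (y.1 : int).

Definition canon_lt (b1 b2 : biletter) : bool :=
  let: (x, y) := b1 in let: (k, l) := b2 in
  [|| x.1 < k.1,
      (x.1 == k.1) && x.2 && ~~ k.2,
      (x == k) && ~~ x.2 && ~~ k.2 && (lneg y < lneg l)%R
    | (x == k) && x.2 && k.2 && (lneg l < lneg y)%R ].

Definition canon_le (b1 b2 : biletter) : bool := (b1 == b2) || canon_lt b1 b2.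

Definition canon (w : seq biletter) : seq biletter := sort canon_le w.

Definition pos_biword (w : seq biletter) : bool :=
  all (fun b => (0 < b.1.1) && (0 < b.2.1)) w.

Definition dcbiword (w : seq biletter) : bool := pos_biword w && sorted canon_le w.

Definition cbiword (w : seq biletter) : bool := dcbiword w && all (fun b => ~~ b.1.2) w.

Definition stbar (w : seq biletter) : seq biletter :=
  [seq ((p.1.+1, p.2.1.2), p.2.2) | p <- zip (iota 0 (size w)) w].

Definition binv (w : seq biletter) : seq biletter := canon [seq (b.2, b.1) | b <- w].

Definition binv_r (w : seq biletter) : seq biletter :=
  canon [seq ((b.2.1, false), (b.1.1, b.2.2)) | b <- w].

Definition colored_involution (w : seq biletter) : bool := cbiword w && (binv_r w == w).

Definition bst (w : seq biletter) : seq biletter := binv (stbar (binv (stbar w))).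

Definition bottom_row (w : seq biletter) : seq letter := [seq b.2 | b <- w].

(* pi_k, 1-based *)
Definition pi_at (pi : seq letter) (k : nat) : letter := nth (0, false) pi k.-1.

Definition in_Bn (n : nat) (pi : seq letter) : bool :=
  perm_eq [seq y.1 | y <- pi] (iota 1 n).

Definition is_fixed (pi : seq letter) k := pi_at pi k == (k, false).
Definition is_bfixed (pi : seq letter) k := pi_at pi k == (k, true).
Definition is_2cycle (pi : seq letter) k l :=
  (pi_at pi k == (l, false)) && (pi_at pi l == (k, false)).
Definition is_b2cycle (pi : seq letter) k l :=
  (pi_at pi k == (l, true)) && (pi_at pi l == (k, true)).

Definition is_involution (n : nat) (pi : seq letter) : Prop :=
  forall k, 1 <= k <= n ->
    [\/ is_fixed pi k, is_bfixed pi k,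
        exists2 l, (1 <= l <= n) && (l != k) & is_2cycle pi k l
      | exists2 l, (1 <= l <= n) && (l != k) & is_b2cycle pi k l].

Definition n_fixed n pi := \sum_(1 <= k < n.+1) is_fixed pi k.
Definition n_bfixed n pi := \sum_(1 <= k < n.+1) is_bfixed pi k.
Definition n_2cycles n pi := \sum_(1 <= k < n.+1) \sum_(k.+1 <= l < n.+1) is_2cycle pi k l.
Definition n_b2cycles n pi := \sum_(1 <= k < n.+1) \sum_(k.+1 <= l < n.+1) is_b2cycle pi k l.

Definition mult (w : seq biletter) (b : biletter) : nat := count_mem b w.
Definition a_ (w : seq biletter) i := mult w ((i, false), (i, false)).
Definition b_ (w : seq biletter) i := mult w ((i, false), (i, true)).
Definition c_ (w : seq biletter) i j := mult w ((i, false), (j, false)).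
Definition d_ (w : seq biletter) i j := mult w ((i, false), (j, true)).

(* a bound exceeding every integer occurring in w; indices i >= bnd w
   contribute 0 to all the sums below *)
Definition bnd (w : seq biletter) : nat := (\max_(b <- w) maxn b.1.1 b.2.1).+1.

From mathcomp Require Import all_boot all_order all_algebra zify.
Set Implicit Arguments. Unset Strict Implicit. Unset Printing Implicit Defensive.

(* Write e_k for the k-th biletter of w and flip_r (x, y) := (|y|, x') for the
   biletter map underlying w^{inv_r}.  Standardising the top row and inverting
   sends e_k = (x, y) to (y, k+1); sorting puts it at some position sigma(k), and
   the second round makes pi_{k+1} = sigma(k) + 1, barred as y is.  Counting the
   biletters below (y, k+1) gives sigma(k) = #{b in w | b < flip_r e_k} + r, where
   r is the rank of e_k among its copies in w, read from the left if y is unbarred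
   and from the right if y is barred.  As w^{inv_r} = w, flip_r permutes the
   multiset w, so the entry of w at position sigma(k) is flip_r e_k, of rank r
   there; applying the formula again returns k, so sigma is an involution.  Its
   fixed points are the copies of (i, i) and the middle copy of each odd block of
   (i, bar i); the pairs k < sigma(k) come from the biletters (i, j), (i, bar j)
   with i < j and from the first half of each block of (i, bar i). *)

Lemma count_split_in (T : eqType) (a b c : pred T) s :
  {in s, forall x, a x = b x + c x :> nat} -> count a s = count b s + count c s.
Proof.
elim: s => //= y s IH abc; rewrite abc ?mem_head // IH => [|x xs]; first by rewrite addnACA.
by rewrite abc // inE xs orbT.
Qed.

Lemma count_iota_lt c m : count (fun r => r < c) (iota 0 m) = minn c m.
Proof. by elim: m => [|m IH]; rewrite ?minn0 // -addn1 iotaD count_cat IH /=; lia. Qed.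

Lemma count_iota_half m : count (fun r => 2 * r + 1 < m) (iota 0 m) = m %/ 2.
Proof.
rewrite (eq_count (a2 := fun r => r < m %/ 2)) => [|r]; last by apply/idP/idP; lia.
by rewrite count_iota_lt; lia.
Qed.

Lemma count_iota_odd m :
  count (fun r => 2 * r + 1 == m) (iota 0 m) = m - 2 * (m %/ 2).
Proof.
have := count_predUI (fun r => 2 * r + 1 < m) (fun r => 2 * r + 1 == m) (iota 0 m).
rewrite (eq_count (a1 := predI _ _) (a2 := pred0)) => [|r /=]; last by lia.
rewrite (eq_count (a1 := predU _ _) (a2 := fun r => r < m.+1 %/ 2)) => [|r /=]; last first.
  by apply/idP/idP; lia.
by rewrite count_pred0 count_iota_half count_iota_lt; lia.
Qed.

Lemma sum_count_pred1 (I T : eqType) (r : seq I) (s : seq T) (g : T -> I)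
    (P : I -> pred T) :
  uniq r -> (forall i x, P i x -> g x = i) ->
  \sum_(i <- r) count (P i) s = count (fun x => (g x \in r) && P (g x) x) s.
Proof.
move=> r_uniq Pg; rewrite -sum1_count big_mkcond /=.
under eq_bigr => i _ do rewrite -sum1_count big_mkcond /=.
rewrite exchange_big [RHS]big_mkcond /=; apply: eq_bigr => x _.
rewrite (eq_bigr (fun i => if i == g x then (P (g x) x : nat) else 0)) => [|i _].
  rewrite -big_mkcond /= big_const_seq /= count_uniq_mem //.
  by case: (g x \in r); case: (P _ x).
by case: eqP => [->|ne]; case: ifP => // /Pg gx; case: ne.
Qed.

Lemma sum_bool_count (T : Type) (r : seq T) (P : pred T) :
  \sum_(x <- r) (P x : nat) = count P r.
Proof. by rewrite -sum1_count [RHS]big_mkcond; apply: eq_bigr => x _; case: (P x). Qed.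

Lemma big_nat_shift1 n (F : nat -> nat) :
  \sum_(1 <= k < n.+1) F k = \sum_(k <- iota 0 n) F k.+1.
Proof. by rewrite big_add1 /= /index_iota subn0. Qed.

Lemma sum_nat_pred1 m N x (G : pred nat) :
  \sum_(m <= l < N) ((l == x) && G l : nat) = (m <= x < N) && G x.
Proof.
rewrite (eq_bigr (fun l => if l == x then G l : nat else 0)) => [|l _]; last first.
  by case: (l == x).
by rewrite -big_mkcond big_nat1_eq; case: ifP.
Qed.

(** * Counting in sorted sequences *)

Lemma count_iota_nth (T : Type) (x0 : T) (P : pred T) s :
  count P s = count (fun k => P (nth x0 s k)) (iota 0 (size s)).
Proof. by rewrite -{1}(mkseq_nth x0 s) count_map. Qed.

Section SortedRank.
Variables (T : eqType) (x0 : T) (lt le : rel T).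
Hypotheses (lt_irr : irreflexive lt) (lt_trans : transitive lt).
Hypothesis leE : forall a b, le a b = (a == b) || lt a b.

Lemma leT_trans : transitive le.
Proof.
move=> b a c; rewrite !leE => /predU1P[->//|ab] /predU1P[<-|bc].
  by rewrite ab orbT.
by rewrite (lt_trans ab bc) orbT.
Qed.

Lemma le_ltF a b : le a b -> lt b a = false.
Proof.
rewrite leE => /predU1P[->|ab]; first exact: lt_irr.
by apply/negP => /(lt_trans ab); rewrite lt_irr.
Qed.

Lemma index_sorted s x : sorted le s -> uniq s -> x \in s ->
  index x s = count (lt^~ x) s.
Proof.
elim: s => [//|a s IH] s_sorted /andP[a_s s_uniq] /=.
have a_min := order_path_min leT_trans s_sorted.
rewrite inE eq_sym; case: eqP => [<- _|ax /= xs].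
  rewrite lt_irr (eq_in_count (a2 := pred0)) ?count_pred0 // => y ys.
  exact: le_ltF (allP a_min y ys).
have := allP a_min x xs; rewrite leE; case: eqP => //= _ ->.
by rewrite IH ?(path_sorted s_sorted).
Qed.

Variable s : seq T.
Hypothesis s_sorted : sorted le s.
Hypothesis s_total : {in s &, forall a b, [|| a == b, lt a b | lt b a]}.
Local Notation n := (size s).

Definition nbelow x := count (lt^~ x) s.
Definition copy_rank k := count (fun j => (j < k) && (nth x0 s j == nth x0 s k)) (iota 0 n).
Definition copy_corank k := count (fun j => (k < j) && (nth x0 s j == nth x0 s k)) (iota 0 n).

Lemma sorted_nth_le j k : j < k -> k < n -> le (nth x0 s j) (nth x0 s k).
Proof.
move=> jk kn; apply: (sorted_ltn_nth leT_trans x0 s_sorted) => //.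
by rewrite inE (ltn_trans jk).
Qed.

Lemma copy_rank_corank k : k < n ->
  copy_rank k + copy_corank k + 1 = count_mem (nth x0 s k) s.
Proof.
move=> kn; have k_once : count (pred1 k) (iota 0 n) = 1.
  by rewrite count_uniq_mem ?iota_uniq // mem_iota kn.
rewrite -k_once (count_iota_nth x0) /copy_rank /copy_corank.
rewrite -(count_split_in (a := fun j => (j < k) && (nth x0 s j == nth x0 s k)
                                    || (k < j) && (nth x0 s j == nth x0 s k))); last first.
  by move=> j _; case: (ltngtP j k) => _; case: (_ == _).
rewrite -(count_split_in (a := fun j => nth x0 s j == nth x0 s k)) // => j _ /=.
by case: (ltngtP j k) => [||->]; rewrite ?eqxx //; case: (_ == _).
Qed.

Lemma nbelow_copy_rank k : k < n -> nbelow (nth x0 s k) + copy_rank k = k.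
Proof.
move=> kn; rewrite /nbelow (count_iota_nth x0) -(count_split_in (a := fun j => j < k)).
  by rewrite count_iota_lt; apply/minn_idPl/ltnW.
move=> j; rewrite mem_iota /= => jn.
case: (ltngtP j k) => [jk|kj|->]; last by rewrite lt_irr.
  by have := sorted_nth_le jk kn; rewrite leE; case: eqP => [->|_ /= ->]; rewrite ?lt_irr ?eqxx.
by rewrite le_ltF ?sorted_nth_le.
Qed.

Lemma nbelow_count_mem x : nbelow x + count_mem x s = count (le^~ x) s.
Proof.
rewrite -(count_split_in (a := le^~ x)) // => b _ /=.
by rewrite leE; case: eqP => [->|_]; rewrite ?lt_irr ?addn0.
Qed.

Lemma nbelow_count_mem_le x y : lt x y -> nbelow x + count_mem x s <= nbelow y.
Proof.
move=> xy; rewrite nbelow_count_mem; apply: sub_count => b /=.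
by rewrite leE => /predU1P[->|/lt_trans]; last exact.
Qed.

Lemma nbelow_count_mem_size x : nbelow x + count_mem x s <= n.
Proof. by rewrite nbelow_count_mem count_size. Qed.

Lemma nth_nbelow x r : x \in s -> r < count_mem x s ->
  [/\ nbelow x + r < n, nth x0 s (nbelow x + r) = x & copy_rank (nbelow x + r) = r].
Proof.
move=> xs r_lt; set q := nbelow x + r.
have qn : q < n by apply: leq_trans (nbelow_count_mem_size x); rewrite ltn_add2l.
have q_pos := nbelow_copy_rank qn; have q_copies := copy_rank_corank qn.
case/or3P: (s_total (mem_nth x0 qn) xs) => [/eqP qx|qx|xq].
- by split=> //; move: q_pos; rewrite qx /q => /addnI.
- by have := nbelow_count_mem_le qx; rewrite /q in q_pos q_copies *; lia.
- by have := nbelow_count_mem_le xq; rewrite /q in q_pos q_copies *; lia.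
Qed.

Lemma filter_nth_eq x : x \in s ->
  [seq k <- iota 0 n | nth x0 s k == x] = iota (nbelow x) (count_mem x s).
Proof.
move=> xs; apply: (irr_sorted_eq ltn_trans ltnn).
- exact/sorted_filter/iota_ltn_sorted/ltn_trans.
- exact: iota_ltn_sorted.
move=> k; rewrite mem_filter !mem_iota add0n /=.
apply/idP/idP; first move=> /andP[/eqP kx kn].
  by have := nbelow_copy_rank kn; have := copy_rank_corank kn; rewrite kx; lia.
move=> /andP[xk kx].
have r_lt : k - nbelow x < count_mem x s by rewrite ltn_subLR.
by have [+ + _] := nth_nbelow xs r_lt; rewrite subnKC // => -> ->; rewrite eqxx.
Qed.

Lemma count_copy_rank x (Q : pred nat) :
  count (fun k => (nth x0 s k == x) && Q (copy_rank k)) (iota 0 n) =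
  count Q (iota 0 (count_mem x s)).
Proof.
have [xs|xNs] := boolP (x \in s); last first.
  rewrite (count_memPn xNs) (eq_in_count (a2 := pred0)) ?count_pred0 // => k.
  by rewrite mem_iota /= => kn; case: eqP => // kx; move: xNs; rewrite -kx mem_nth.
rewrite (eq_count (a2 := predI (Q \o copy_rank) (fun k => nth x0 s k == x))) => [|k].
  rewrite -count_filter filter_nth_eq // -[nbelow x]addn0 iotaDl count_map.
  by apply: eq_in_count => r; rewrite mem_iota /= => r_lt; have [_ _ ->] := nth_nbelow xs r_lt.
exact: andbC.
Qed.

End SortedRank.

(** * The canonical order on biletters *)

Lemma canon_ltE x1 x2 y1 y2 k1 k2 l1 l2 :
  canon_lt ((x1, x2), (y1, y2)) ((k1, k2), (l1, l2)) =
  [|| x1 < k1, (x1 == k1) && x2 && ~~ k2,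
      (x1 == k1) && ~~ x2 && ~~ k2 && (lneg (y1, y2) < lneg (l1, l2))%R
    | (x1 == k1) && x2 && k2 && (lneg (l1, l2) < lneg (y1, y2))%R].
Proof. by rewrite /canon_lt xpair_eqE; case: x2; case: k2; rewrite ?andbT ?andbF. Qed.

Lemma canon_lt_irr : irreflexive canon_lt.
Proof. by move=> [[x1 x2] [y1 y2]]; rewrite canon_ltE /lneg; case: x2; case: y2 => /=; lia. Qed.

Lemma canon_lt_trans : transitive canon_lt.
Proof.
move=> [[a1 a2] [b1 b2]] [[c1 c2] [d1 d2]] [[e1 e2] [f1 f2]].
rewrite !canon_ltE /lneg /=.
by case: a2; case: c2; case: e2; case: b2; case: d2; case: f2 => /=; lia.
Qed.

Lemma canon_leE a b : canon_le a b = (a == b) || canon_lt a b.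
Proof. by []. Qed.

Lemma canon_le_trans : transitive canon_le.
Proof. exact: leT_trans canon_lt_trans canon_leE. Qed.

Definition pos_biletter (b : biletter) := (0 < b.1.1) && (0 < b.2.1).

Lemma canon_lt_total a b : pos_biletter a -> pos_biletter b ->
  [|| a == b, canon_lt a b | canon_lt b a].
Proof.
case: a b => [[a1 a2] [b1 b2]] [[c1 c2] [d1 d2]].
rewrite /pos_biletter !canon_ltE /lneg !xpair_eqE /=.
by case: a2; case: b2; case: c2; case: d2 => /=; lia.
Qed.

Lemma canon_le_total : {in pos_biletter &, total canon_le}.
Proof.
move=> a b pa pb; rewrite !canon_leE.
by case/or3P: (canon_lt_total pa pb) => [/eqP->|->|->]; rewrite ?eqxx ?orbT.
Qed.

Lemma canon_le_anti : antisymmetric canon_le.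
Proof.
move=> a b /andP[ab]; rewrite canon_leE => /predU1P[//|ba].
by rewrite (le_ltF canon_lt_irr canon_lt_trans canon_leE ab) in ba.
Qed.

Definition flip_r (b : biletter) : biletter := ((b.2.1, false), (b.1.1, b.2.2)).

Lemma flip_rK b : b.1.2 = false -> flip_r (flip_r b) = b.
Proof. by case: b => [[x1 x2] [y1 y2]] /= ->. Qed.

Lemma flip_r_eqE b : b.1.2 = false -> (flip_r b == b) = (b.1.1 == b.2.1).
Proof.
by case: b => [[x1 x2] [y1 y2]] /= ->; apply/eqP/eqP => [[->]|->].
Qed.

Lemma canon_lt_flip_r b : b.1.2 = false -> canon_lt b (flip_r b) = (b.1.1 < b.2.1).
Proof.
by case: b => [[x1 []] [y1 y2]] // _; rewrite canon_ltE /lneg; case: y2 => /=; lia.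
Qed.

Lemma canon_lt_transposed a b j k :
  a.1.2 = false -> b.1.2 = false -> pos_biletter a -> pos_biletter b ->
  canon_le a b -> j < k ->
  canon_lt (a.2, (j.+1, false)) (b.2, (k.+1, false)) =
    canon_lt (flip_r a) (flip_r b) || (a == b) && ~~ b.2.2 /\
  canon_lt (b.2, (k.+1, false)) (a.2, (j.+1, false)) =
    canon_lt (flip_r b) (flip_r a) || (a == b) && b.2.2.
Proof.
case: a b => [[a1 []] [b1 b2]] [[c1 []] [d1 d2]] // _ _.
rewrite /pos_biletter canon_leE !canon_ltE /lneg !xpair_eqE /=.
by case: b2; case: d2 => /=; split; lia.
Qed.

(** * Standardisation of a colored involution *)

Definition biletter0 : biletter := ((0, false), (0, false)).

Lemma stbar_mkseq s : stbar s =
  mkseq (fun k => ((k.+1, (nth biletter0 s k).1.2), (nth biletter0 s k).2)) (size s).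
Proof.
rewrite /stbar -{2}(mkseq_nth biletter0 s) /mkseq -{1}(map_id (iota 0 (size s))).
by rewrite zip_map -map_comp.
Qed.

Lemma binv_stbar s : binv (stbar s) =
  canon (mkseq (fun k => ((nth biletter0 s k).2, (k.+1, (nth biletter0 s k).1.2))) (size s)).
Proof. by rewrite /binv stbar_mkseq /mkseq -map_comp. Qed.

Lemma canon_std (f : nat -> letter) n s :
  (forall k, k < n -> 0 < (f k).1) ->
  perm_eq s (mkseq (fun k => ((k.+1, false), f k)) n) ->
  canon s = mkseq (fun k => ((k.+1, false), f k)) n.
Proof.
move=> f_pos s_perm; apply: (sorted_eq canon_le_trans canon_le_anti).
- apply: (sort_sorted_in canon_le_total); rewrite (perm_all _ s_perm).
  by apply/allP => b /mapP[k]; rewrite mem_iota => /andP[_ kn] ->; rewrite /pos_biletter /= f_pos.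
- rewrite /mkseq sorted_map; apply: sub_sorted (iota_ltn_sorted 0 n) => j k jk.
  by move: jk => /= jk; rewrite /relpre /= canon_leE /canon_lt /= ltnS jk orbT.
by rewrite /canon perm_sort.
Qed.

Section ColoredInvolution.
Variable w : seq biletter.
Hypothesis w_inv : colored_involution w.

Local Notation n := (size w).
Local Notation e := (nth biletter0 w).
Local Notation nbelow_w := (nbelow canon_lt w).
Local Notation rank := (copy_rank biletter0 w).
Local Notation corank := (copy_corank biletter0 w).

Lemma w_sorted : sorted canon_le w.
Proof. by case/andP: w_inv => /andP[/andP[]]. Qed.

Lemma top_unbarred k : k < n -> (e k).1.2 = false.
Proof.
by case/andP: w_inv => /andP[_ /allP tops] _ kn; apply/negbTE/tops/mem_nth.
Qed.

Lemma w_pos : all pos_biletter w.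
Proof. by case/andP: w_inv => /andP[/andP[]]. Qed.

Lemma e_pos k : k < n -> pos_biletter (e k).
Proof. by move=> kn; apply: (allP w_pos); apply: mem_nth. Qed.

Lemma w_total : {in w &, forall a b, [|| a == b, canon_lt a b | canon_lt b a]}.
Proof. by move=> a b aw bw; apply: canon_lt_total; apply: (allP w_pos). Qed.

Lemma perm_flip_r : perm_eq (map flip_r w) w.
Proof.
case/andP: w_inv => _ /eqP w_fix; rewrite -{2}w_fix /binv_r /canon.
by rewrite perm_sym perm_sort.
Qed.

Lemma count_mem_flip_r k : k < n -> count_mem (flip_r (e k)) w = count_mem (e k) w.
Proof.
move=> kn; rewrite -(permP perm_flip_r) count_map (count_iota_nth biletter0).
rewrite [RHS](count_iota_nth biletter0); apply: eq_in_count => j; rewrite mem_iota /= => jn.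
apply/eqP/eqP => [|-> //]; rewrite -{2}(flip_rK (top_unbarred kn)) -{2}(flip_rK (top_unbarred jn)).
by move->.
Qed.

Lemma flip_r_mem k : k < n -> flip_r (e k) \in w.
Proof.
by move=> kn; rewrite -has_pred1 has_count count_mem_flip_r // -has_count has_pred1 mem_nth.
Qed.

(* [transposed k] is the k-th biletter of (w^{\overline{st}})^{inv} before sorting. *)
Definition transposed k : biletter := ((e k).2, (k.+1, false)).
Definition w_st_inv := canon (mkseq transposed n).
Definition sigma k := index (transposed k) w_st_inv.

Lemma binv_stbar_w : binv (stbar w) = w_st_inv.
Proof.
rewrite binv_stbar /w_st_inv /mkseq; congr canon; apply/eq_in_map => k.
by rewrite mem_iota /= => kn; rewrite top_unbarred.
Qed.

Lemma perm_w_st_inv : perm_eq w_st_inv (mkseq transposed n).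
Proof. by rewrite /w_st_inv /canon perm_sort perm_refl. Qed.

Lemma w_st_inv_uniq : uniq w_st_inv.
Proof. by rewrite (perm_uniq perm_w_st_inv) mkseq_uniq // => j k [_ [->]]. Qed.

Lemma w_st_inv_sorted : sorted canon_le w_st_inv.
Proof.
apply: (sort_sorted_in canon_le_total); apply/allP => b /mapP[k].
by rewrite mem_iota => /andP[_ kn] ->; rewrite /pos_biletter /= andbT; case/andP: (e_pos kn).
Qed.

Lemma size_w_st_inv : size w_st_inv = n.
Proof. by rewrite (perm_size perm_w_st_inv) size_mkseq. Qed.

Lemma transposed_mem k : k < n -> transposed k \in w_st_inv.
Proof. by move=> kn; rewrite (perm_mem perm_w_st_inv) map_f // mem_iota. Qed.

Lemma sigma_lt k : k < n -> sigma k < n.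
Proof.
by move=> kn; rewrite /sigma -size_w_st_inv index_mem transposed_mem.
Qed.

Lemma nth_sigma k : k < n -> nth biletter0 w_st_inv (sigma k) = transposed k.
Proof. by move=> kn; rewrite nth_index // transposed_mem. Qed.

Lemma perm_sigma : perm_eq [seq sigma k | k <- iota 0 n] (iota 0 n).
Proof.
have sigma_uniq : uniq [seq sigma k | k <- iota 0 n].
  rewrite map_inj_in_uniq ?iota_uniq // => j k; rewrite !mem_iota /= => jn kn sjk.
  by have := nth_sigma jn; rewrite sjk nth_sigma // => -[_ []].
apply: uniq_perm (iota_uniq 0 n) _ => //; apply: (uniq_min_size sigma_uniq _ _).2.
  by move=> x /mapP[k]; rewrite !mem_iota /= => kn ->; apply: sigma_lt.
by rewrite size_map.
Qed.

Lemma bottom_row_bst :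
  bottom_row (bst w) = mkseq (fun k => ((sigma k).+1, (e k).2.2)) n.
Proof.
rewrite /bst binv_stbar_w binv_stbar size_w_st_inv.
rewrite (@canon_std (fun k => ((sigma k).+1, (e k).2.2)) n) => [|//|].
  by rewrite /bottom_row /mkseq -map_comp.
rewrite perm_sym /mkseq.
have -> : [seq ((k.+1, false), ((sigma k).+1, (e k).2.2)) | k <- iota 0 n] =
  [seq ((nth biletter0 w_st_inv q).2, (q.+1, (nth biletter0 w_st_inv q).1.2))
  | q <- [seq sigma k | k <- iota 0 n]].
  by rewrite -map_comp; apply/eq_in_map => k; rewrite mem_iota /= => kn; rewrite nth_sigma.
exact: perm_map perm_sigma.
Qed.

Lemma e_rank k : k < n -> nbelow_w (e k) + rank k = k.
Proof. exact: (nbelow_copy_rank biletter0 canon_lt_irr canon_lt_trans canon_leE w_sorted). Qed.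

Lemma e_copies k : k < n -> rank k + corank k + 1 = count_mem (e k) w.
Proof. exact: copy_rank_corank. Qed.

Lemma transposed_lt j k : j < n -> k < n ->
  canon_lt (transposed j) (transposed k) =
  canon_lt (flip_r (e j)) (flip_r (e k)) ||
  (e j == e k) && (if (e k).2.2 then k < j else j < k).
Proof.
have e_le := sorted_nth_le biletter0 canon_lt_trans canon_leE w_sorted.
move=> jn kn; case: (ltngtP j k) => [jk|kj|<-].
- have [-> _] := canon_lt_transposed (top_unbarred jn) (top_unbarred kn)
    (e_pos jn) (e_pos kn) (e_le _ _ jk kn) jk.
  by case: (e k).2.2; rewrite ?andbF ?andbT.
- have [_ ->] := canon_lt_transposed (top_unbarred kn) (top_unbarred jn)
    (e_pos kn) (e_pos jn) (e_le _ _ kj jn) kj.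
  by rewrite [e j == _]eq_sym; case: eqP => [->|]; case: (e j).2.2.
- by rewrite !canon_lt_irr if_same andbF.
Qed.

(* Copies of one biletter of w become biletters (y, k+1) that differ only in k;
   for barred y the canonical order compares them by decreasing k, hence the
   corank. *)
Lemma sigma_eq k : k < n ->
  sigma k = nbelow_w (flip_r (e k)) + (if (e k).2.2 then corank k else rank k).
Proof.
move=> kn.
have -> : nbelow_w (flip_r (e k)) =
    count (fun j => canon_lt (flip_r (e j)) (flip_r (e k))) (iota 0 n).
  by rewrite /nbelow -(permP perm_flip_r) count_map (count_iota_nth biletter0).
have -> : (if (e k).2.2 then corank k else rank k) =
    count (fun j => (e j == e k) && (if (e k).2.2 then k < j else j < k)) (iota 0 n).
  by case: (e k).2.2; apply: eq_count => j; rewrite andbC.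
rewrite /sigma (index_sorted canon_lt_irr canon_lt_trans canon_leE) ?w_st_inv_sorted
  ?w_st_inv_uniq ?transposed_mem // (permP perm_w_st_inv).
have -> : count (canon_lt^~ (transposed k)) (mkseq transposed n) =
    count (fun j => canon_lt (transposed j) (transposed k)) (iota 0 n).
  exact: count_map.
apply: count_split_in => j; rewrite mem_iota add0n => /andP[_ jn].
rewrite transposed_lt //.
by case: eqP => [->|_]; rewrite ?canon_lt_irr ?orbF ?addn0.
Qed.

Lemma sigma_spec k : k < n ->
  [/\ sigma k < n, e (sigma k) = flip_r (e k)
    & rank (sigma k) = if (e k).2.2 then corank k else rank k].
Proof.
move=> kn; rewrite sigma_eq //.
apply: (nth_nbelow biletter0 canon_lt_irr canon_lt_trans canon_leE w_sorted w_total).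
  exact: flip_r_mem.
by rewrite count_mem_flip_r // -e_copies //; case: (e k).2.2; lia.
Qed.

Lemma sigmaK k : k < n -> sigma (sigma k) = k.
Proof.
move=> kn; have [qn e_q rank_q] := sigma_spec kn.
have := e_copies qn; have := e_copies kn; have := e_rank kn.
rewrite [sigma (sigma k)]sigma_eq // e_q flip_rK ?top_unbarred // count_mem_flip_r //= rank_q.
by case: (e k).2.2; lia.
Qed.

Lemma sigma_fixE k : k < n -> (sigma k == k) =
  ((e k).1.1 == (e k).2.1) && ((e k).2.2 ==> (2 * rank k + 1 == count_mem (e k) w)).
Proof.
move=> kn; rewrite -flip_r_eqE ?top_unbarred //.
have [flip_fix|flip_move] := eqVneq (flip_r (e k)) (e k); last first.
  have [_ e_q _] := sigma_spec kn.
  by apply/negbTE; apply: contra_neq flip_move => sk; rewrite -e_q sk.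
have := e_copies kn; have := e_rank kn; rewrite sigma_eq // flip_fix /=.
case: (e k).2.2 => /= [? ?|-> _]; last by rewrite eqxx.
by apply/eqP/eqP; lia.
Qed.

Lemma sigma_gtE k : k < n -> (k < sigma k) =
  ((e k).1.1 < (e k).2.1) ||
  [&& (e k).1.1 == (e k).2.1, (e k).2.2 & 2 * rank k + 1 < count_mem (e k) w].
Proof.
move=> kn; have top := top_unbarred kn.
have below_le := nbelow_count_mem_le canon_lt_irr canon_lt_trans canon_leE w.
have := e_copies kn; have := e_rank kn; rewrite sigma_eq // -canon_lt_flip_r // -flip_r_eqE //.
have flip_pos : pos_biletter (flip_r (e k)) by case/andP: (e_pos kn) => ? ?; apply/andP.
case/or3P: (canon_lt_total (e_pos kn) flip_pos) => [/eqP flip_fix|e_lt|e_gt].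
- rewrite -flip_fix canon_lt_irr eqxx /=.
  by case: (e k).2.2 => [? ?|-> _]; [apply/idP/idP; lia | rewrite ltnn].
- by have := below_le _ _ e_lt; rewrite e_lt; case: (e k).2.2 => ? ? ?; lia.
- have := below_le _ _ e_gt; rewrite count_mem_flip_r //.
  have -> : canon_lt (e k) (flip_r (e k)) = false.
    by apply: (le_ltF canon_lt_irr canon_lt_trans canon_leE); rewrite canon_leE e_gt orbT.
  rewrite (negbTE (contraTneq _ e_gt)) => [|->]; last by rewrite canon_lt_irr.
  by case: (e k).2.2 => ? ? ?; apply/negbTE; rewrite -leqNgt; lia.
Qed.

(** * Cycle statistics *)

Local Notation pi := (bottom_row (bst w)).

Lemma pi_at_bst k : k < n -> pi_at pi k.+1 = ((sigma k).+1, (e k).2.2).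
Proof. by move=> kn; rewrite /pi_at bottom_row_bst /= nth_mkseq. Qed.

Lemma bar_sigma k : k < n -> (e (sigma k)).2.2 = (e k).2.2.
Proof. by move=> kn; have [_ -> _] := sigma_spec kn. Qed.

Lemma in_Bn_bst : in_Bn n pi.
Proof.
rewrite /in_Bn bottom_row_bst /mkseq -map_comp.
have -> : iota 1 n = [seq k.+1 | k <- iota 0 n] by rewrite -[1]/(1 + 0) iotaDl.
by rewrite (eq_map (g := succn \o sigma)) // map_comp perm_map ?perm_sigma.
Qed.

Lemma is_involution_bst : is_involution n pi.
Proof.
move=> l /andP[l_gt0 ln]; have kn : l.-1 < n by rewrite prednK.
rewrite -(prednK l_gt0); move: (l.-1) kn => k kn {l l_gt0 ln}.
have sn := sigma_lt kn.
rewrite /is_fixed /is_bfixed /is_2cycle /is_b2cycle pi_at_bst //.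
have [->|sk] := eqVneq (sigma k) k.
  by case: (e k).2.2; [apply: Or42 | apply: Or41].
have partner : (0 < (sigma k).+1 <= n) && ((sigma k).+1 != k.+1) by rewrite ltnS sn eqSS sk.
have pi_partner : pi_at pi (sigma k).+1 = (k.+1, (e k).2.2).
  by rewrite pi_at_bst ?sigmaK ?bar_sigma.
case: (e k).2.2 pi_partner => pi_partner; [apply: Or44 | apply: Or43];
  by exists (sigma k).+1; rewrite // pi_partner !eqxx.
Qed.

Lemma sum_pi_fixed c : \sum_(1 <= k < n.+1) (pi_at pi k == (k, c) : nat) =
  count (fun k => (sigma k == k) && ((e k).2.2 == c)) (iota 0 n).
Proof.
rewrite big_nat_shift1 sum_bool_count; apply: eq_in_count => k.
by rewrite mem_iota add0n => /andP[_ kn]; rewrite /= pi_at_bst // xpair_eqE eqSS.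
Qed.

Lemma sum_pi_2cycles c :
  \sum_(1 <= k < n.+1) \sum_(k.+1 <= l < n.+1)
     ((pi_at pi k == (l, c)) && (pi_at pi l == (k, c)) : nat) =
  count (fun k => (k < sigma k) && ((e k).2.2 == c)) (iota 0 n).
Proof.
rewrite big_nat_shift1 -sum_bool_count; apply: eq_big_seq => k.
rewrite mem_iota add0n => /andP[_ kn].
under eq_bigr => l _ do rewrite pi_at_bst // xpair_eqE [_ == l]eq_sym -andbA.
rewrite sum_nat_pred1 pi_at_bst ?sigmaK ?bar_sigma // ?sigma_lt //.
by rewrite xpair_eqE !eqxx !ltnS sigma_lt // andbT andbb.
Qed.

Lemma e_lt_bnd k : k < n -> (e k).1.1 < bnd w /\ (e k).2.1 < bnd w.
Proof.
move=> kn; rewrite /bnd !ltnS.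
have := @leq_bigmax_seq _ w xpredT (fun b => maxn b.1.1 b.2.1) _ (mem_nth biletter0 kn) isT.
by rewrite geq_max => /andP.
Qed.

Lemma sum_diag_count c (Q : pred nat) :
  \sum_(1 <= i < bnd w) count (fun k => (e k == ((i, false), (i, c))) && Q k) (iota 0 n) =
  count (fun k => [&& (e k).1.1 == (e k).2.1, (e k).2.2 == c & Q k]) (iota 0 n).
Proof.
rewrite (sum_count_pred1 (iota 0 n) (g := fun k => (e k).2.1)) ?iota_uniq //; last first.
  by move=> i k /andP[/eqP ->].
apply: eq_in_count => k; rewrite mem_iota add0n => /andP[_ kn] /=.
rewrite mem_index_iota (proj2 (e_lt_bnd kn)) andbT; case/andP: (e_pos kn) => _ ->.
move: (top_unbarred kn); case: (e k) => [[x1 []] [y1 y2]] //= _.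
by rewrite !xpair_eqE !eqxx /= andbT andbA.
Qed.

Lemma sum_offdiag_count c :
  \sum_(1 <= i < bnd w) \sum_(i.+1 <= j < bnd w)
     count (fun k => e k == ((i, false), (j, c))) (iota 0 n) =
  count (fun k => ((e k).1.1 < (e k).2.1) && ((e k).2.2 == c)) (iota 0 n).
Proof.
have inner i : \sum_(i.+1 <= j < bnd w) count (fun k => e k == ((i, false), (j, c))) (iota 0 n)
  = count (fun k => ((e k).2.1 \in index_iota i.+1 (bnd w)) &&
                    (e k == ((i, false), ((e k).2.1, c)))) (iota 0 n).
  by rewrite (sum_count_pred1 (iota 0 n) (g := fun k => (e k).2.1)) ?iota_uniq // => j k /eqP ->.
rewrite (eq_bigr _ (fun i _ => inner i)).
rewrite (sum_count_pred1 (iota 0 n) (g := fun k => (e k).1.1)) ?iota_uniq //; last first.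
  by move=> i k /andP[_ /eqP ->].
apply: eq_in_count => k; rewrite mem_iota add0n => /andP[_ kn] /=.
have [top_lt bot_lt] := e_lt_bnd kn.
rewrite !mem_index_iota top_lt bot_lt !andbT; case/andP: (e_pos kn) => -> _ /=.
move: (top_unbarred kn); case: (e k) => [[x1 []] [y1 y2]] //= _.
by rewrite !xpair_eqE !eqxx /=.
Qed.

Lemma count_rank_mult x (Q : nat -> nat -> bool) :
  count (fun k => (e k == x) && Q (rank k) (count_mem (e k) w)) (iota 0 n) =
  count (Q^~ (count_mem x w)) (iota 0 (count_mem x w)).
Proof.
rewrite -(count_copy_rank biletter0 canon_lt_irr canon_lt_trans canon_leE w_sorted w_total).
by apply: eq_count => k; case: eqP => // ->.
Qed.

Lemma n_fixed_bst : n_fixed n pi = \sum_(1 <= i < bnd w) a_ w i.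
Proof.
rewrite [LHS](sum_pi_fixed false).
under eq_bigr => i _ do rewrite /a_ /mult (count_iota_nth biletter0) -(eq_count (fun k => andbT _)).
rewrite sum_diag_count; apply: eq_in_count => k; rewrite mem_iota add0n => /andP[_ kn] /=.
by rewrite sigma_fixE //; case: (e k).2.2; rewrite ?andbF ?andbT.
Qed.

Lemma n_bfixed_bst :
  n_bfixed n pi = \sum_(1 <= i < bnd w) (b_ w i - 2 * (b_ w i %/ 2)).
Proof.
rewrite [LHS](sum_pi_fixed true).
under eq_bigr => i _ do rewrite -count_iota_odd
  -(count_rank_mult _ (fun r m => 2 * r + 1 == m)).
rewrite sum_diag_count; apply: eq_in_count => k; rewrite mem_iota add0n => /andP[_ kn] /=.
by rewrite sigma_fixE //; case: (e k).2.2; rewrite ?andbF ?andbT.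
Qed.

Lemma n_2cycles_bst :
  n_2cycles n pi = \sum_(1 <= i < bnd w) \sum_(i.+1 <= j < bnd w) c_ w i j.
Proof.
rewrite [LHS](sum_pi_2cycles false).
under eq_bigr => i _ do under eq_bigr => j _ do rewrite /c_ /mult (count_iota_nth biletter0).
rewrite sum_offdiag_count; apply: eq_in_count => k; rewrite mem_iota add0n => /andP[_ kn] /=.
by rewrite sigma_gtE //; case: (e k).2.2; rewrite ?andbF ?andbT ?orbF.
Qed.

Lemma n_b2cycles_bst :
  n_b2cycles n pi = \sum_(1 <= i < bnd w) \sum_(i.+1 <= j < bnd w) d_ w i j
                    + \sum_(1 <= i < bnd w) (b_ w i %/ 2).
Proof.
rewrite [LHS](sum_pi_2cycles true).
under eq_bigr => i _ do under eq_bigr => j _ do rewrite /d_ /mult (count_iota_nth biletter0).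
under [X in _ + X]eq_bigr => i _ do rewrite -count_iota_half
  -(count_rank_mult _ (fun r m => 2 * r + 1 < m)).
rewrite sum_offdiag_count sum_diag_count; apply: count_split_in => k.
rewrite mem_iota add0n => /andP[_ kn] /=; rewrite sigma_gtE //.
case: (e k).2.2; rewrite ?andbF ?andbT //=.
by case: ltngtP.
Qed.

End ColoredInvolution.

Theorem lemma5 (w : seq biletter) :
  colored_involution w ->
  let n := size w in
  let pi := bottom_row (bst w) in
  let N := bnd w in
  in_Bn n pi /\ is_involution n pi /\
  n_fixed n pi = \sum_(1 <= i < N) a_ w i /\
  n_bfixed n pi = \sum_(1 <= i < N) (b_ w i - 2 * (b_ w i %/ 2)) /\
  n_2cycles n pi = \sum_(1 <= i < N) \sum_(i.+1 <= j < N) c_ w i j /\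
  n_b2cycles n pi = \sum_(1 <= i < N) \sum_(i.+1 <= j < N) d_ w i j
                    + \sum_(1 <= i < N) (b_ w i %/ 2).
Proof.
move=> w_inv /=.
split; first exact: in_Bn_bst.
split; first exact: is_involution_bst.
split; first exact: n_fixed_bst.
split; first exact: n_bfixed_bst.
split; first exact: n_2cycles_bst.
exact: n_b2cycles_bst.
Qed.
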